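(* Consider the $k$-agent prophet game with random tie-breaking. For every $\ell\in\{1,\ldots,n\}$, let $$T^\ell=\frac{1}{k+\ell}\sum_{j=1}^{\ell}\mathbb{E}[y_j].$$ Then for every agent $i$, the single threshold strategy $T^\ell$ guarantees agent $i$ an expected utility of at least $T^\ell$; that is, for every strategy profile $S_{-i}$ of the other agents, $u_i(T^\ell,S_{-i})\ge T^\ell$.
   Context: Prophet game with competing agents: there are $n$ rewards $v_1,\ldots,v_n$, where $v_t$ is a non-negative real random variable drawn from a known distribution $F_t$ (with finite mean), independently across $t$. There are $k$ agents. At each time $t=1,\ldots,n$, the value $v_t$ is revealed to all agents, and every active agent (an agent who has not yet received a reward) decides whether to select $v_t$. If exactly one agent selects $v_t$, it is assigned to that agent. If several agents select it, it is assigned to one of them by the tie-breaking rule. Under random tie-breaking, the reward goes to a uniformly random agent among those selecting it. An agent who receives a reward becomes inactive, and unselected rewards are lost forever. A strategy of an agent is a (possibly randomized) rule that, for each $t$, decides whether to select $v_t$ based on $t$, the realized value $v_t$, and the set of currently active agents. The utility $u_i(S)$ of agent $i$ under strategy profile $S=(S_1,\ldots,S_k)=(S_i,S_{-i})$ is her expected received reward (zero if she receives none). A strategy $S_i$ guarantees agent $i$ utility $\alpha$ if $u_i(S_i,S_{-i})\ge\alpha$ for every $S_{-i}$. The single threshold strategy $T$ selects $v_t$ if and only if the agent is still active and $v_t\ge T$. For $j=1,\ldots,n$, $y_j$ denotes the $j$-th largest value among $v_1,\ldots,v_n$. *)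

From HB Require Import structures.
From mathcomp Require Import all_boot all_order all_algebra.
From mathcomp Require Import all_classical all_reals all_analysis.
Set Implicit Arguments. Unset Strict Implicit. Unset Printing Implicit Defensive.
Import Order.TTheory GRing.Theory Num.Theory.
Local Open Scope ring_scope.

(* Time steps are indexed 0, ..., n-1 (paper: 1, ..., n).
   A (behavioral, possibly randomized) strategy gives, for each time t, each
   set A of currently active agents and each realized value v, the probability
   with which the agent selects v.  The agents' randomizations are independent. *)
Definition strategy (R : realType) (k : nat) := nat -> {set 'I_k} -> R -> R.

Definition valid_strategy (R : realType) (k : nat) (s : strategy R k) : Prop :=
  forall t A, measurable_fun setT (s t A) /\ forall v, 0 <= s t A v <= 1.

Definition thr_strategy (R : realType) (k : nat) (T : R) : strategy R k :=
  fun _ _ v => if T <= v then 1 else 0.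

Local Open Scope ereal_scope.

(* One round from the point of view of agent i, with active set A, value v,
   selection probabilities sig j of the agents, and continuation value
   W : {set 'I_k} -> \bar R (expected future utility of i given the next
   active set).  B is the (random) set of active agents that select v; the
   reward goes to a uniformly random member of B (random tie-breaking). *)
Definition round_value (R : realType) (k : nat) (i : 'I_k) (A : {set 'I_k})
    (sig : 'I_k -> R) (W : {set 'I_k} -> \bar R) (v : R) : \bar R :=
  \sum_(B : {set 'I_k} | B \subset A)
     (\prod_(j in A) (if j \in B then sig j else 1 - sig j))%R%:E *
     (if B == finset.set0 then W A
      else \sum_(j in B)
             ((#|B|%:R)^-1)%R%:E * (if j == i then v%:E else W (A :\ j))).

Fixpoint util_from (R : realType) (k : nat) (F : nat -> probability R R)
    (S : 'I_k -> strategy R k) (i : 'I_k) (m t : nat) (A : {set 'I_k}) : \bar R :=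
  match m with
  | 0 => 0
  | m'.+1 =>
      if i \in A then
        \int[F t]_v round_value i A (fun j => S j t A v)
                                    (util_from F S i m' t.+1) v
      else 0
  end.

Definition utility (R : realType) (k n : nat) (F : nat -> probability R R)
    (S : 'I_k -> strategy R k) (i : 'I_k) : \bar R :=
  util_from F S i n 0 [set: 'I_k].

(* Expectation of f(v_0,...,v_{m-1}) under independent v_t ~ Fs_t
   (iterated integral = integral w.r.t. the product measure). *)
Fixpoint iter_expect (R : realType) (Fs : seq (probability R R))
    (f : seq R -> \bar R) : \bar R :=
  match Fs with
  | [::] => f [::]
  | F0 :: Fs' => \int[F0]_x iter_expect Fs' (fun s => f (x :: s))
  end.

Local Close Scope ereal_scope.

Definition jth_largest (R : realType) (j : nat) (vs : seq R) : R :=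
  nth 0 (sort (fun x y : R => y <= x) vs) j.-1.

(* E[y_j] (a real number, finite under the finite mean assumption). *)
Definition E_y (R : realType) (n : nat) (F : nat -> probability R R) (j : nat) : R :=
  fine (iter_expect [seq F t | t <- iota 0 n] (fun vs => (jth_largest j vs)%:E)).

Definition T_ell (R : realType) (k n : nat) (F : nat -> probability R R) (l : nat) : R :=
  ((k + l)%:R)^-1 * \sum_(1 <= j < l.+1) E_y n F j.

(* Let T be any threshold and e_t = E[(v_t - T)^+] the mean excess of the
   t-th value over T.  The proof has two independent halves.

   Game side: an active agent playing threshold T secures, by backward
   induction over the rounds, min(T, (1/k) sum_t e_t) against any strategies
   of the others.  In one round, with continuation value at least M <= T, it
   gets at least M + (v - T)^+ / k: when v >= T it selects v and wins it with
   probability at least 1/k (otherwise it keeps a continuation >= M), and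
   when v < T it does not select.

   Prophet side: the l largest values are each at most T + their excess, so
   sum_{j<=l} E[y_j] <= l T + sum_t e_t.  For T = T^l, whose definition reads
   (k + l) T^l = sum_{j<=l} E[y_j], this gives k T^l <= sum_t e_t, so the
   minimum above equals T^l.

   Expectations of non-measurable functions occur (the iterated expectation of
   order statistics), so we first establish monotonicity and superadditivity
   of the integral without measurability hypotheses. *)
From HB Require Import structures.
From mathcomp Require Import all_boot all_order all_algebra.
From mathcomp Require Import all_classical all_reals all_analysis.
From mathcomp Require Import lra.
Import Order.TTheory GRing.Theory Num.Theory.
Local Open Scope ring_scope.
Local Open Scope classical_set_scope.
Set Implicit Arguments. Unset Strict Implicit. Unset Printing Implicit Defensive.

Lemma ereal_sup_sum_le (R : realType) (A B : set (\bar R)) (c : \bar R) :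
  A 0%E -> B 0%E -> (forall a, A a -> 0 <= a)%E ->
  (forall a b, A a -> B b -> a + b <= c)%E ->
  (ereal_sup A + ereal_sup B <= c)%E.
Proof.
move=> A0 B0 A_ge0 hab.
have c0 : (0 <= c)%E by have := hab 0%E 0%E A0 B0; rewrite adde0.
case: c c0 hab => [r| |] c0 hab; last 2 first.
- by rewrite leey.
- by move: c0; rewrite leeNy_eq.
have supB : ereal_sup B \is a fin_num.
  rewrite fin_numE; apply/andP; split.
    by rewrite gt_eqF// (lt_le_trans _ (ereal_sup_ubound B0)) ?ltNyr.
  rewrite lt_eqF// (le_lt_trans (y:=r%:E)) ?ltry//.
  by apply: ge_ereal_sup => b Bb; have := hab 0%E b A0 Bb; rewrite add0e.
rewrite -leeBrDr//; apply: ge_ereal_sup => a Aa.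
have afin : a \is a fin_num.
  rewrite fin_numE; apply/andP; split.
    by rewrite gt_eqF// (lt_le_trans _ (A_ge0 a Aa)) ?ltNyr.
  by rewrite lt_eqF// (le_lt_trans (y:=r%:E)) ?ltry// -(adde0 a) hab.
rewrite leeBrDr// addeC -leeBrDr//; apply: ge_ereal_sup => b Bb.
by rewrite leeBrDr// addeC hab.
Qed.

Section integral_without_measurability.
Context (R : realType) (mu : {measure set R -> \bar R}).
Import HBNNSimple.
Local Open Scope ereal_scope.

(* The integral of a nonnegative function is the supremum of the integrals of
   the simple functions below it; hence it is monotone without any
   measurability assumption. *)
Lemma ge0_integral_le_pointwise (f g : R -> \bar R) :
  (forall x, 0 <= f x) -> (forall x, f x <= g x) ->
  \int[mu]_x f x <= \int[mu]_x g x.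
Proof.
move=> f0 fg.
have g0 x : 0 <= g x by exact: le_trans (f0 x) (fg x).
rewrite !ge0_integralTE//; apply: ereal_sup_le => _ [h hf <-].
by exists h => //= x; exact: le_trans (hf x) (fg x).
Qed.

Lemma integral_le_pointwise (f g : R -> \bar R) :
  (forall x, f x <= g x) -> \int[mu]_x f x <= \int[mu]_x g x.
Proof.
move=> fg; rewrite (integralE _ _ f) (integralE _ _ g); apply: leeB.
- apply: ge0_integral_le_pointwise => x; first exact: funepos_ge0.
  by apply: (funepos_le (D:=setT)); rewrite ?inE // => y _; exact: fg.
- apply: ge0_integral_le_pointwise => x; first exact: funeneg_ge0.
  by apply: (funeneg_le (D:=setT)); rewrite ?inE // => y _; exact: fg.
Qed.

(* Superadditivity of the integral of nonnegative (possibly non-measurable)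
   functions: sums of simple functions below f and g lie below f + g. *)
Lemma ge0_integral_superadditive (f g : R -> \bar R) :
  (forall x, 0 <= f x) -> (forall x, 0 <= g x) ->
  \int[mu]_x f x + \int[mu]_x g x <= \int[mu]_x (f x + g x).
Proof.
move=> f0 g0.
rewrite !ge0_integralTE//; last by move=> x; rewrite adde_ge0.
apply: ereal_sup_sum_le.
- by exists nnsfun0; [move=> x /=; rewrite f0|exact: sintegral0].
- by exists nnsfun0; [move=> x /=; rewrite g0|exact: sintegral0].
- by move=> _ [h _ <-]; exact: sintegral_ge0.
move=> _ _ [h1 h1f <-] [h2 h2g <-].
rewrite -sintegralD; apply: ereal_sup_ubound => /=.
by exists (h1 \+ h2)%R => //= x; rewrite EFinD leeD.
Qed.

End integral_without_measurability.

Lemma integral_affine (R : realType) (P : probability R R) (h : R -> R) (c a : R) :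
  P.-integrable setT (EFin \o h) ->
  (\int[P]_x (c + a * h x)%:E = (c + a * fine (\int[P]_x (h x)%:E))%:E)%E.
Proof.
move=> ih.
have iah : P.-integrable setT (EFin \o (fun x => a * h x)).
  apply: (eq_integrable measurableT _ _ _ (integrableZl measurableT a ih)).
  by move=> x _ /=; rewrite EFinM.
under eq_integral do rewrite EFinD.
have hD := integralD_EFin measurableT
  (finite_measure_integrable_cst P c measurableT) iah.
rewrite /= in hD; rewrite hD integral_cst //.
rewrite (_ : Measure.sort _ [set: R] = 1%E) ?mule1; last exact: probability_setT.
under eq_integral do rewrite EFinM.
by rewrite (integralZl measurableT ih) -(fineK (integrable_fin_num _ ih)).
Qed.

Section iterated_expectation.
Context (R : realType).
Implicit Types (Fs : seq (probability R R)) (f g : seq R -> \bar R).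
Local Open Scope ereal_scope.

Lemma iter_expect_le Fs f g :
  (forall s, size s = size Fs -> f s <= g s) ->
  iter_expect Fs f <= iter_expect Fs g.
Proof.
elim: Fs f g => [|F0 Fs IH] f g fg /=; first exact: fg.
apply: integral_le_pointwise => x; apply: IH => s hs.
by apply: fg => /=; rewrite hs.
Qed.

Lemma iter_expect_ge0 Fs f :
  (forall s, size s = size Fs -> 0 <= f s) -> 0 <= iter_expect Fs f.
Proof.
elim: Fs f => [|F0 Fs IH] f f0 /=; first exact: f0.
apply: integral_ge0 => x _; apply: IH => s hs.
by apply: f0 => /=; rewrite hs.
Qed.

Lemma iter_expect_superadditive Fs f g :
  (forall s, size s = size Fs -> 0 <= f s) ->
  (forall s, size s = size Fs -> 0 <= g s) ->
  iter_expect Fs f + iter_expect Fs g <= iter_expect Fs (fun s => f s + g s).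
Proof.
elim: Fs f g => [|F0 Fs IH] f g f0 g0 /=; first by [].
have f0' x : 0 <= iter_expect Fs (fun s => f (x :: s)).
  by apply: iter_expect_ge0 => s hs; apply: f0 => /=; rewrite hs.
have g0' x : 0 <= iter_expect Fs (fun s => g (x :: s)).
  by apply: iter_expect_ge0 => s hs; apply: g0 => /=; rewrite hs.
apply: le_trans (ge0_integral_superadditive F0 f0' g0') _.
apply: integral_le_pointwise => x; apply: IH => s hs.
- by apply: f0 => /=; rewrite hs.
- by apply: g0 => /=; rewrite hs.
Qed.

(* A finite sum of expectations of nonnegative functions is at most the
   expectation of the sum (equality would need measurability). *)
Lemma iter_expect_sum_superadditive Fs (I : Type) (r : seq I)
    (f : I -> seq R -> \bar R) :
  (forall j s, size s = size Fs -> 0 <= f j s) ->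
  \sum_(j <- r) iter_expect Fs (f j) <=
  iter_expect Fs (fun s => \sum_(j <- r) f j s).
Proof.
move=> f0; elim: r => [|j r IH].
  by rewrite big_nil; apply: iter_expect_ge0 => s _; rewrite big_nil.
rewrite big_cons; apply: le_trans; first exact: (leeD2l _ IH).
apply: le_trans; first apply: iter_expect_superadditive => s hs.
- exact: f0.
- by apply: sume_ge0 => j' _; exact: f0.
by apply: iter_expect_le => s _; rewrite big_cons.
Qed.

Lemma iter_expect_affine (F : nat -> probability R R) (h : R -> R) (m t0 : nat)
    (c : R) :
  (forall t, (t0 <= t < t0 + m)%N -> (F t).-integrable setT (EFin \o h)) ->
  iter_expect [seq F t | t <- iota t0 m] (fun s => (c + \sum_(x <- s) h x)%R%:E)
  = (c + \sum_(t <- iota t0 m) fine (\int[F t]_x (h x)%:E))%R%:E.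
Proof.
elim: m t0 c => [|m IH] t0 c ih /=; first by rewrite !big_nil.
have ih0 : (F t0).-integrable setT (EFin \o h).
  by apply: ih; rewrite leqnn /= addnS ltnS leq_addr.
set K := (\sum_(t <- iota t0.+1 m) fine (\int[F t]_x (h x)%:E))%R.
transitivity (\int[F t0]_x ((c + K) + 1 * h x)%R%:E).
  apply: eq_integral => x _.
  have -> : (fun s => (c + \sum_(y <- x :: s) h y)%R%:E) =
            fun s => ((c + h x) + \sum_(y <- s) h y)%R%:E.
    by apply: funext => s; rewrite big_cons addrA.
  rewrite IH ?mul1r; first by rewrite addrAC.
  move=> t /andP[t0t tm]; apply: ih; rewrite addnS ltnW //=.
rewrite integral_affine // mul1r big_cons.
by congr (_%:E); rewrite addrAC addrA.
Qed.

End iterated_expectation.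

Definition excess (R : realType) (T x : R) : R := Num.max (x - T) 0.

Definition mean_excess (R : realType) (F : nat -> probability R R) (T : R)
    (t : nat) : R :=
  fine (\int[F t]_x (excess T x)%:E).

Section excess.
Context (R : realType) (T : R).
Implicit Types x : R.

Lemma excess_ge0 x : 0 <= excess T x.
Proof. by rewrite /excess le_max lexx orbT. Qed.

Lemma le_threshold_add_excess x : x <= T + excess T x.
Proof. by rewrite -lerBlDl /excess le_max lexx. Qed.

Lemma excess_le_norm x : `|excess T x| <= `|x| + `|T|.
Proof.
rewrite ger0_norm ?excess_ge0 // /excess ge_max addr_ge0 ?normr_ge0 // andbT.
by apply: lerD; [exact: ler_norm | rewrite -normrN ler_norm].
Qed.

Lemma measurable_excess : measurable_fun setT (excess T).
Proof.
apply: (measurable_realfun.measurable_maxr (f := fun x => x - T) (g := cst 0)) => //.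
exact: measurable_realfun.measurable_funB.
Qed.

Lemma top_values_le_excess (vs : seq R) (l : nat) : (l <= size vs)%N ->
  \sum_(1 <= j < l.+1) Num.max (jth_largest j vs) 0 <=
  l%:R * T + \sum_(x <- vs) excess T (Num.max x 0).
Proof.
move=> l_le.
set srt := sort (fun x y : R => y <= x) vs.
have size_srt : size srt = size vs by rewrite size_sort.
rewrite big_add1 /= /jth_largest -/srt.
have -> : \sum_(x <- vs) excess T (Num.max x 0) =
          \sum_(0 <= j < size srt) excess T (Num.max (nth 0 srt j) 0).
  rewrite (perm_big srt); first by rewrite (big_nth 0).
  by rewrite perm_sym perm_sort.
rewrite size_srt (@big_cat_nat _ _ _ l 0 (size vs)) //=.
apply: (@le_trans _ _ (\sum_(0 <= j < l) (T + excess T (Num.max (nth 0 srt j) 0)))).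
  by apply: ler_sum => j _; exact: le_threshold_add_excess.
rewrite big_split /= sumr_const_nat subn0 mulr_natl lerD2l lerDl.
by apply: sumr_ge0 => j _; exact: excess_ge0.
Qed.

End excess.

Lemma integrable_linear_bound (R : realType) (P : probability R R) (c : R)
    (h : R -> R) :
  P.-integrable setT (fun x => x%:E) -> measurable_fun setT h ->
  (forall x, `|h x| <= `|x| + c) -> P.-integrable setT (EFin \o h).
Proof.
move=> iid mh hb.
have ig : P.-integrable setT (fun x => (`|x| + c)%:E).
  apply: (@eq_integrable _ _ _ P setT measurableT
    ((abse \o (fun x => x%:E)) \+ (EFin \o cst c))%E) => //.
  apply: integrableD => //; first exact: integrable_abse.
  exact: finite_measure_integrable_cst.
apply: le_integrable ig => //; first exact/measurable_realfun.measurable_EFinP.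
move=> x _ /=; rewrite lee_fin (le_trans (hb x)) //.
by rewrite [X in _ <= X]ger0_norm // (le_trans _ (hb x)).
Qed.

Lemma integrable_excess (R : realType) (P : probability R R) (T : R) :
  P.-integrable setT (fun x => x%:E) -> P.-integrable setT (EFin \o excess T).
Proof.
move=> iid; apply: integrable_linear_bound iid (measurable_excess T) _.
exact: excess_le_norm.
Qed.

Section clipped_excess.
Context (R : realType) (P : probability R R) (T : R).
Hypothesis P_mean : P.-integrable setT (fun x => x%:E).

(* The excess of the value clipped at 0, which is nonnegative pointwise
   in the value, as needed for the order-statistics bound. *)
Let clipped_excess (x : R) : R := excess T (Num.max x 0).

Lemma integrable_clipped_excess : P.-integrable setT (EFin \o clipped_excess).
Proof.
have mclip : measurable_fun setT (fun x : R => Num.max x 0).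
  exact: (measurable_realfun.measurable_maxr (f := id) (g := cst 0)).
apply: (integrable_linear_bound (c := `|T|)) P_mean _ _.
  exact: measurableT_comp (measurable_excess T) mclip.
move=> x; rewrite /clipped_excess; apply: le_trans (excess_le_norm T _) _.
by rewrite lerD2r; have [x0|x0] := leP x 0; rewrite ?normr0.
Qed.

(* Values are a.s. nonnegative, so clipping them at 0 does not increase the
   mean excess. *)
Lemma mean_clipped_excess_le : P [set x : R | x < 0] = 0%E ->
  fine (\int[P]_x (clipped_excess x)%:E) <= fine (\int[P]_x (excess T x)%:E).
Proof.
move=> P_neg.
apply: fine_le; [exact: integrable_fin_num integrable_clipped_excess|
                 exact: integrable_fin_num (integrable_excess T P_mean)|].
apply: ae_ge0_le_integral => //.
- by move=> x _; rewrite lee_fin excess_ge0.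
- exact: measurable_int integrable_clipped_excess.
- by move=> x _; rewrite lee_fin excess_ge0.
- by apply/measurable_realfun.measurable_EFinP; exact: measurable_excess.
exists [set x : R | x < 0]; split => //.
- rewrite (_ : [set x : R | x < 0] = [set` `]-oo, 0[%R]); first exact: measurable_itv.
  by apply/seteqP; split => x /=; rewrite in_itv.
- move=> x /= hx; rewrite ltNge; apply/negP => x0; apply: hx => _.
  by rewrite /clipped_excess (max_l x0).
Qed.

End clipped_excess.

Lemma fine_le_ge0 (R : realType) (x y : \bar R) :
  (x <= y)%E -> (0 <= y)%E -> ((fine x)%:E <= y)%E.
Proof. by case: x => [r| |]. Qed.

Lemma sum_E_y_le (R : realType) (n : nat) (F : nat -> probability R R)
    (F_nonneg : forall t, (t < n)%N -> F t [set x : R | x < 0] = 0%E)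
    (F_mean : forall t, (t < n)%N -> (F t).-integrable setT (fun x : R => x%:E))
    (l : nat) (hln : (l <= n)%N) (T : R) :
  \sum_(1 <= j < l.+1) E_y n F j <=
  l%:R * T + \sum_(t <- iota 0 n) mean_excess F T t.
Proof.
set Fs := [seq F t | t <- iota 0 n].
have size_Fs : size Fs = n by rewrite size_map size_iota.
pose clipped_excess (x : R) := excess T (Num.max x 0).
apply: (@le_trans _ _ (l%:R * T +
    \sum_(t <- iota 0 n) fine (\int[F t]_x (clipped_excess x)%:E))); last first.
  rewrite lerD2l big_seq [X in _ <= X]big_seq; apply: ler_sum => t.
  rewrite mem_iota add0n => /= tn.
  exact: mean_clipped_excess_le T (F_mean t tn) (F_nonneg t tn).
rewrite -lee_fin -sumEFin.
have clip_ge0 (x : R) : (0 <= (Num.max x 0)%:E)%E by rewrite lee_fin le_max lexx orbT.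
apply: (@le_trans _ _ (\sum_(1 <= j < l.+1)
          iter_expect Fs (fun vs => (Num.max (jth_largest j vs) 0)%:E))%E).
  apply: lee_sum => j _; apply: fine_le_ge0.
    by apply: iter_expect_le => s _; rewrite lee_fin le_max lexx.
  by apply: iter_expect_ge0.
apply: le_trans; first exact: iter_expect_sum_superadditive.
rewrite -iter_expect_affine; last first.
  by move=> t /andP[_]; rewrite add0n => tn; exact: integrable_clipped_excess T (F_mean t tn).
apply: iter_expect_le => s size_s; rewrite sumEFin lee_fin.
by apply: top_values_le_excess; rewrite size_s size_Fs.
Qed.

(* When the agents of A select independently with probabilities s j, the
   probabilities of the possible selecting sets B \subset A sum to 1: expand
   prod_(j in A) (s j + (1 - s j)) = 1. *)
Lemma selection_prob_sum1 (R : comPzRingType) (I : finType) (A : {set I})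
    (s : I -> R) :
  \sum_(B : {set I} | B \subset A)
     \prod_(j in A) (if j \in B then s j else 1 - s j) = 1.
Proof.
pose F j := if j \in A then s j else 0.
pose G j := if j \in A then 1 - s j else 1.
have := @bigA_distr R 0 1 *%R +%R _ F G.
rewrite big1 => [|j _]; last by rewrite /F /G; case: (j \in A); rewrite /= ?subrKC ?add0r.
move=> /esym; rewrite (bigID (fun B : {set I} => B \subset A)) /=.
rewrite [X in _ + X]big1 => [|B /subsetPn [j jB jA]]; last first.
  by rewrite (bigD1 j) //= jB /F (negbTE jA) mul0r.
rewrite addr0 => sum_eq1; apply: etrans sum_eq1; apply: eq_big => // B BA.
rewrite [RHS](bigID (mem A)) /= [X in _ * X]big1 ?mulr1 => [|j jA].
  by apply: eq_bigr => j jA; rewrite /F /G jA.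
have jB : j \notin B by apply: contra jA; exact: (fintype.subsetP BA).
by rewrite (negbTE jB) /G (negbTE jA).
Qed.

Section uniform_split.
Context (R : numFieldType) (I : finType) (B : {set I}).

Lemma uniform_split_const (y : R) : B != finset.set0 ->
  \sum_(j in B) (#|B|%:R^-1 * y) = y.
Proof.
move=> Bn0; rewrite sumr_const -[_ *+ #|B|]mulr_natl mulrA mulfV ?mul1r //.
by rewrite pnatr_eq0 -lt0n card_gt0.
Qed.

Lemma uniform_split (i : I) (x y : R) : i \in B ->
  \sum_(j in B) (#|B|%:R^-1 * (if j == i then x else y)) =
  y + #|B|%:R^-1 * (x - y).
Proof.
move=> iB; have Bn0 : B != finset.set0 by apply/set0Pn; exists i.
transitivity (\sum_(j in B) (#|B|%:R^-1 * y +
                #|B|%:R^-1 * ((if j == i then x else y) - y))).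
  by apply: eq_bigr => j _; rewrite -mulrDr addrC subrK.
rewrite big_split /= uniform_split_const // (bigD1 i) //= eqxx big1 ?addr0 //.
by move=> j /andP[_ /negbTE ->]; rewrite subrr mulr0.
Qed.

End uniform_split.

Section one_round.
Context (R : realType) (k : nat) (i : 'I_k) (A : {set 'I_k})
  (W : {set 'I_k} -> \bar R) (v T M : R).
Hypotheses (iA : i \in A) (MT : M <= T)
  (W_ge : forall A' : {set 'I_k}, i \in A' -> (M%:E <= W A')%E).

(* If i wins the draw it gets v, otherwise it stays active and
   continues with value at least M; in the worst case all k agents select. *)
Lemma outcome_bound (B : {set 'I_k}) :
  B \subset A -> (i \in B) = (T <= v) ->
  ((M + k%:R^-1 * excess T v)%:E <=
   (if B == finset.set0 then W A
    else \sum_(j in B) ((#|B|%:R)^-1)%:E *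
           (if j == i then v%:E else W (A :\ j))))%E.
Proof.
move=> BA iB_eq.
have W_rm j : j != i -> (M%:E <= W (A :\ j))%E.
  by move=> ji; apply: W_ge; rewrite in_setD1 eq_sym ji iA.
have [iB|iB] := boolP (i \in B).
- have Tv : T <= v by rewrite -iB_eq.
  have Bn0 : B != finset.set0 by apply/set0Pn; exists i.
  rewrite (negbTE Bn0).
  apply: (@le_trans _ _ (\sum_(j in B)
          ((#|B|%:R^-1 * (if j == i then v else M))%R)%:E)); last first.
    apply: lee_sum => j jB; rewrite EFinM; apply: lee_wpmul2l.
      by rewrite lee_fin invr_ge0 ler0n.
    by case: eqP => [_|/eqP ji]; [exact: lexx | exact: W_rm].
  rewrite sumEFin lee_fin uniform_split // lerD2l /excess max_l ?subr_ge0 //.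
  have B_le_k : (#|B| <= k)%N by have := max_card (mem B); rewrite card_ord.
  apply: ler_pM; rewrite ?invr_ge0 ?ler0n ?subr_ge0 //.
  + rewrite lef_pV2 ?posrE ?ltr0n ?card_gt0 ?ler_nat //.
    exact: leq_ltn_trans (leq0n i) (ltn_ord i).
  + by rewrite lerD2l lerN2.
- have vT : v < T by rewrite ltNge -iB_eq iB.
  rewrite /excess max_r ?mulr0 ?addr0; last by rewrite subr_le0 ltW.
  case: ifP => [_|/negbT Bn0]; first exact: W_ge.
  rewrite -(uniform_split_const M Bn0) -sumEFin.
  apply: lee_sum => j jB; rewrite EFinM; apply: lee_wpmul2l.
    by rewrite lee_fin invr_ge0 ler0n.
  have ji : j != i by apply: contraNneq iB => <-.
  by rewrite (negbTE ji); exact: W_rm.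
Qed.

Lemma round_value_ge (sig : 'I_k -> R) :
  (forall j, 0 <= sig j <= 1) -> sig i = (if T <= v then 1 else 0) ->
  ((M + k%:R^-1 * excess T v)%:E <= round_value i A sig W v)%E.
Proof.
move=> sig01 sig_i.
pose p (B : {set 'I_k}) := \prod_(j in A) (if j \in B then sig j else 1 - sig j).
have p_ge0 B : 0 <= p B.
  apply: prodr_ge0 => j _; have /andP[s0 s1] := sig01 j.
  by case: ifP; rewrite ?subr_ge0.
have -> : M + k%:R^-1 * excess T v =
          \sum_(B : {set 'I_k} | B \subset A) p B * (M + k%:R^-1 * excess T v).
  by rewrite -mulr_suml selection_prob_sum1 mul1r.
rewrite -sumEFin; apply: lee_sum => B BA; rewrite -/(p B).
have [->|pB0] := eqVneq (p B) 0; first by rewrite mul0r mul0e.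
rewrite EFinM; apply: lee_wpmul2l; first by rewrite lee_fin.
apply: outcome_bound => //.
(* a selecting set of positive probability agrees with i's threshold rule *)
have : (if i \in B then sig i else 1 - sig i) != 0.
  by move: pB0; rewrite /p (bigD1 i) //=; apply: contra => /eqP ->; rewrite mul0r.
by rewrite sig_i; case: (i \in B); case: (T <= v); rewrite /= ?subrr ?eqxx.
Qed.

End one_round.

Section threshold_play.
Context (R : realType) (k n : nat) (F : nat -> probability R R) (T : R)
  (i : 'I_k) (S : 'I_k -> strategy R k).
Hypotheses
  (F_mean : forall t, (t < n)%N -> (F t).-integrable setT (fun x : R => x%:E))
  (S01 : forall j t A v, 0 <= S j t A v <= 1)
  (S_i : forall t A v, S i t A v = if T <= v then 1 else 0).

Lemma threshold_guarantee_from (m t : nat) (A : {set 'I_k}) :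
  i \in A -> (t + m <= n)%N ->
  ((Num.min T (k%:R^-1 * \sum_(u <- iota t m) mean_excess F T u))%:E <=
   util_from F S i m t A)%E.
Proof.
elim: m t A => [|m IH] t A iA tmn /=.
  by rewrite big_nil mulr0 lee_fin ge_min lexx orbT.
rewrite iA big_cons.
set e := mean_excess F T t; set G := \sum_(u <- iota t.+1 m) _.
have tn : (t < n)%N by apply: leq_trans tmn; rewrite -addn1 leq_add2l.
have e_ge0 : 0 <= e.
  by apply: fine_ge0; apply: integral_ge0 => x _; rewrite lee_fin excess_ge0.
apply: (@le_trans _ _
    (\int[F t]_v (Num.min T (k%:R^-1 * G) + k%:R^-1 * excess T v)%:E)%E).
  rewrite integral_affine; last exact: integrable_excess (F_mean tn).
  rewrite lee_fin -/e mulrDr; have [TG|GT] := leP T (k%:R^-1 * G); rewrite ge_min.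
    by rewrite lerDl mulr_ge0 ?invr_ge0 ?ler0n.
  by rewrite addrC lexx orbT.
apply: integral_le_pointwise => v; apply: round_value_ge => //.
- by rewrite ge_min lexx.
- by move=> A' iA'; apply: IH; rewrite // addSnnS.
Qed.

End threshold_play.

Lemma T_ell_le_mean_excess (R : realType) (k n : nat) (F : nat -> probability R R)
    (F_nonneg : forall t, (t < n)%N -> F t [set x : R | x < 0] = 0%E)
    (F_mean : forall t, (t < n)%N -> (F t).-integrable setT (fun x : R => x%:E))
    (l : nat) (hln : (l <= n)%N) : (0 < k)%N ->
  T_ell k n F l <= k%:R^-1 * \sum_(t <- iota 0 n) mean_excess F (T_ell k n F l) t.
Proof.
move=> k0; set T := T_ell k n F l.
have prophet := sum_E_y_le F_nonneg F_mean hln T.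
have T_def : (k + l)%:R * T = \sum_(1 <= j < l.+1) E_y n F j.
  by rewrite /T /T_ell mulrA mulfV ?mul1r // pnatr_eq0 addn_eq0 negb_and -lt0n k0.
rewrite -(@ler_pM2l _ k%:R) ?ltr0n // [X in _ <= X]mulrA mulfV ?mul1r ?pnatr_eq0 -?lt0n //.
rewrite natrD mulrDl in T_def; lra.
Qed.

Theorem theorem1 (R : realType) (k n : nat) (F : nat -> probability R R)
    (F_nonneg : forall t, (t < n)%N -> F t [set x : R | x < 0] = 0%E)
    (F_mean : forall t, (t < n)%N -> (F t).-integrable setT (fun x : R => x%:E))
    (i : 'I_k) (S : 'I_k -> strategy R k)
    (S_valid : forall j, j != i -> valid_strategy (S j))
    (l : nat) (hl1 : (1 <= l)%N) (hln : (l <= n)%N) :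
  ((T_ell k n F l)%:E <=
     utility n F (fun j => if j == i then thr_strategy (T_ell k n F l) else S j) i)%E.
Proof.
have k0 : (0 < k)%N by exact: leq_ltn_trans (leq0n i) (ltn_ord i).
set T := T_ell k n F l.
set S' := fun j => if j == i then thr_strategy T else S j.
have S'01 j t A v : 0 <= S' j t A v <= 1.
  rewrite /S'; case: eqP => [_|/eqP ji]; last exact: (S_valid j ji t A).2.
  by rewrite /thr_strategy; case: ifP; rewrite ?lexx ?ler01.
have S'_i t A v : S' i t A v = if T <= v then 1 else 0 by rewrite /S' eqxx.
have := threshold_guarantee_from F_mean S'01 S'_i (m := n) (t := 0) (finset.in_setT i) (leqnn n).
by rewrite (min_l (T_ell_le_mean_excess F_nonneg F_mean hln k0)).
Qed.
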